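(* Let $1\le a<b<c\le n$ and let $M$ be the rank-$3$ shifted matroid on $[n]$ indexed by $\{a,b,c\}$, i.e. the matroid with bases $\{\{a',b',c'\}:1\le a'<b'<c'\le n,\ a'\le a,\ b'\le b,\ c'\le c\}$. Then $M$ is DJS if and only if $\lfloor\frac{c-b}{2}\rfloor<a$.
   Context: A rank-$3$ matroid $M$ on $[n]$ is called DJS if, letting $E$ be the set of non-loop elements of $M$, every linear ordering $w_1w_2\cdots w_m$ of $E$ has three consecutive elements $\{w_j,w_{j+1},w_{j+2}\}$ forming a basis of $M$. *)

From mathcomp Require Import all_boot.
Set Implicit Arguments. Unset Strict Implicit. Unset Printing Implicit Defensive.

(* A rank-3 matroid on the ground set [n] = {1,...,n} is given here by its
   family of bases; a 3-element subset of [n] is encoded as a duplicate-free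
   sequence of length 3 (order irrelevant: the predicates below are invariant
   under permutation). *)

Definition shifted_basis (n a b c : nat) (T : seq nat) : bool :=
  [exists a' : 'I_n.+1, exists b' : 'I_n.+1, exists c' : 'I_n.+1,
    [&& 1 <= a', a' < b', b' < c', c' <= n, a' <= a, b' <= b, c' <= c
      & perm_eq T [:: val a'; val b'; val c']]].

Definition nonloop (n : nat) (B : seq nat -> bool) (x : nat) : Prop :=
  1 <= x <= n /\ exists T : seq nat, B T /\ x \in T.

Definition DJS (n : nat) (B : seq nat -> bool) : Prop :=
  forall w : seq nat, uniq w -> (forall x, x \in w <-> nonloop n B x) ->
    exists j, j.+2 < size w /\ B [:: nth 0 w j; nth 0 w j.+1; nth 0 w j.+2].

From mathcomp Require Import all_boot zify.

(* Every element of [c] is a non-loop, and the bases are the 3-subsets of [c]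
   containing an element <= a and two elements <= b.  Call x small if x <= a and
   medium if x <= b; an ordering of [c] has no basis among its windows of three
   consecutive elements iff no window holds a small element together with another
   medium one.  In such an ordering, cut at b: on either side, a small element is
   at distance at least 3 from the previous medium element (looking away from b),
   so it owns the two non-medium elements just before it.  Hence the a small
   elements need 2a of the c - b elements above b.  Conversely, if 2a <= c - b, the
   ordering a, b+2a-1, b+2a, a-1, ..., 1, b+1, b+2, followed by the other elements
   above b and then by a+1, ..., b, has no basis window. *)

Set Implicit Arguments.
Unset Strict Implicit.
Unset Printing Implicit Defensive.

Section Windows.
Variable T : eqType.
Implicit Types (s : seq T) (W : seq T).

Fixpoint windows s : seq (seq T) :=
  if s is x :: s' then
    if s' is y :: z :: _ then [:: x; y; z] :: windows s' else [::]
  else [::].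

Lemma size_windows s : size (windows s) = (size s).-2.
Proof. by elim: s => [|x [|y [|z s]] IHs] //=; rewrite IHs. Qed.

Lemma nth_windows x0 s j : j < (size s).-2 ->
  nth [::] (windows s) j = [:: nth x0 s j; nth x0 s j.+1; nth x0 s j.+2].
Proof.
elim: s j => [|x [|y [|z s]] IHs] [|j] //= j_lt.
by rewrite IHs.
Qed.

Lemma mem_windows s W : (W \in windows s) = (size W == 3) && infix W s.
Proof.
elim: s => [|x s' IHs].
  by rewrite in_nil infixs0; case: W => [|? ?]; rewrite ?andbF.
case: s' IHs => [|y [|z s]] IHs.
1,2: rewrite in_nil; apply/esym/negbTE/negP => /andP[/eqP W3 Ws].
1,2: by have := size_infix Ws; rewrite W3.
rewrite [windows _]/= in_cons IHs [infix W (x :: _)]infix_consl andb_orr.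
congr (_ || _); clear IHs.
by case: W => [|u [|v [|w [|? ?]]]] //=; rewrite !eqseq_cons ?andbF ?prefix0s ?andbT.
Qed.

Lemma has_windowsP x0 (P : pred (seq T)) s :
  reflect (exists j, j.+2 < size s /\ P [:: nth x0 s j; nth x0 s j.+1; nth x0 s j.+2])
          (has P (windows s)).
Proof.
apply: (iffP (has_nthP [::])) => [[j] | [j [j_lt Pj]]].
  by rewrite size_windows => j_lt; rewrite (nth_windows x0) //; exists j; split => //; lia.
by exists j; rewrite ?size_windows ?(nth_windows x0) //; lia.
Qed.

End Windows.

Lemma DJS_windows n (B : seq nat -> bool) :
  DJS n B <->
  forall w : seq nat, uniq w -> (forall x, x \in w <-> nonloop n B x) -> has B (windows w).
Proof.
by split=> djs w uw mw; apply/(has_windowsP 0); apply: djs.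
Qed.

Section Crowding.
Variables (T : eqType) (small medium : pred T).
Implicit Types (s p r W : seq T).

Definition crowded W := has small W && (1 < count medium W).

Definition uncrowded s := ~~ has crowded (windows s).

Lemma uncrowded_cons3 x y z s :
  uncrowded [:: x, y, z & s] = ~~ crowded [:: x; y; z] && uncrowded [:: y, z & s].
Proof. by rewrite /uncrowded /= negb_or. Qed.

Lemma uncrowded_window s W : uncrowded s -> infix W s -> size W = 3 -> ~~ crowded W.
Proof. by move=> /hasPn unc Ws W3; apply: unc; rewrite mem_windows W3 eqxx. Qed.

Lemma uncrowded_infix s s' : infix s s' -> uncrowded s' -> uncrowded s.
Proof.
move=> ss' unc; apply/hasPn => W; rewrite mem_windows => /andP[/eqP W3 Ws].
exact: uncrowded_window unc (infix_trans Ws ss') W3.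
Qed.

Lemma uncrowded_rev s : uncrowded s -> uncrowded (rev s).
Proof.
move=> unc; apply/hasPn => W; rewrite mem_windows => /andP[/eqP W3 Ws].
have -> : crowded W = crowded (rev W) by rewrite /crowded has_rev count_rev.
by apply: uncrowded_window unc _ _; rewrite ?size_rev // infix_revLR.
Qed.

Lemma uncrowded_hasNsmall s : ~~ has small s -> uncrowded s.
Proof.
move=> /hasPn no_small; apply/hasPn => W; rewrite mem_windows => /andP[_ /mem_infix Ws].
by apply/nandP; left; apply/hasPn => x /Ws /no_small.
Qed.

Hypothesis small_medium : subpred small medium.

Lemma crowded3 x y z : (small x || small y || small z) ->
  1 < medium x + medium y + medium z -> crowded [:: x; y; z].
Proof. by rewrite /crowded /=; lia. Qed.

(* The prefix [p] only guarantees that some window meets both [h] and the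
   element following it. *)
Lemma uncrowded_count_small p h r : medium h -> 2 < size (p ++ h :: r) ->
  uncrowded (p ++ h :: r) -> 2 * count small r <= count (predC medium) r.
Proof.
have [k] := ubnP (size r); elim: k p h r => // k IH p h r /ltnSE r_le_k med_h size3 unc.
have := sub_count small_medium r; case: (posnP (count medium r)) => [-> | ]; first lia.
rewrite -has_count => med_r; move: unc size3 r_le_k.
case: (split_find med_r) => m r1 r2 med_m no_med_r1; rewrite cat_rcons => unc size3 r_le_k.
have r1_long : small m -> 1 < size r1.
  move=> sm; rewrite ltnNge; apply/negP => r1_short.
  have crowded_hm x : [&& crowded [:: x; h; m], crowded [:: h; m; x] & crowded [:: h; x; m]].
    by rewrite !crowded3 ?sm ?orbT //; lia.
  case: r1 {no_med_r1 r_le_k} r1_short unc size3 => [|y [|? ?]] // _ unc size3.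
  - case: r2 unc size3 => [|z r2] unc size3.
      case/lastP: p unc size3 => [|p' q] //; rewrite cat_rcons => unc _.
      have /negP[] := uncrowded_window unc (suffix_infix p' [:: q; h; m]) erefl.
      by case/and3P: (crowded_hm q).
    have /negP[] := uncrowded_window unc (infix_infix p [:: h; m; z] r2) erefl.
    by case/and3P: (crowded_hm z).
  - have /negP[] := uncrowded_window unc (infix_infix p [:: h; y; m] r2) erefl.
    by case/and3P: (crowded_hm y).
have IH2 : 2 * count small r2 <= count (predC medium) r2.
  by apply: (IH (p ++ h :: r1) m); rewrite -?catA //; move: r_le_k; rewrite size_cat /=; lia.
have r1_no_med : count medium r1 = 0 by apply/eqP; rewrite -leqn0 leqNgt -has_count.
have := count_predC medium r1; have := sub_count small_medium r1.
rewrite !count_cat /= med_m; case: (small m) r1_long; lia.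
Qed.

End Crowding.

Lemma shifted_basis_perm n a b c T T' : perm_eq T T' ->
  shifted_basis n a b c T = shifted_basis n a b c T'.
Proof.
move=> /permPl eqT; apply: eq_existsb => x; apply: eq_existsb => y.
by apply: eq_existsb => z; rewrite eqT.
Qed.

Lemma shifted_basisE n a b c T : c <= n ->
  shifted_basis n a b c T = [&& uniq T, size T == 3, all (fun t => 0 < t <= c) T,
                                has (fun t => t <= a) T & 1 < count (fun t => t <= b) T].
Proof.
move=> le_cn; apply/idP/idP.
  case/existsP => x /existsP[y /existsP[z /and5P[? ? ? ? /and4P[? ? ? pT]]]].
  rewrite (perm_uniq pT) (perm_size pT) (perm_all _ pT) (perm_has _ pT) (permP pT) /= !inE.
  lia.
have sortT := permEl (perm_sort leq T).
rewrite -(shifted_basis_perm _ _ _ _ sortT) -(perm_uniq sortT) -(perm_size sortT).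
rewrite -(perm_all _ sortT) -(perm_has _ sortT) -(permP sortT).
have := sort_sorted leq_total T.
case: (sort leq T) => [|x [|y [|z [|? ?]]]] sorted_xyz; rewrite /= ?andbF // !inE => T_basis.
apply/existsP; exists (inord x); apply/existsP; exists (inord y).
apply/existsP; exists (inord z).
by move: sorted_xyz; rewrite /= !inordK ?perm_refl ?andbT; lia.
Qed.

Lemma nonloop_shiftedE n a b c x : 1 <= a -> a < b -> b < c -> c <= n ->
  nonloop n (shifted_basis n a b c) x <-> 0 < x <= c.
Proof.
move=> a_gt0 lt_ab lt_bc le_cn; split.
  by case=> _ [T [+ xT]]; rewrite shifted_basisE // => /and5P[_ _ /allP/(_ x xT)].
move=> x_range; split; first lia.
have [le_xa | lt_ax] := leqP x a.
  by exists [:: x; b; c]; rewrite shifted_basisE //= !inE eqxx; lia.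
have [le_xb | lt_bx] := leqP x b.
  by exists [:: 1; x; c]; rewrite shifted_basisE //= !inE eqxx orbT; lia.
by exists [:: 1; b; x]; rewrite shifted_basisE //= !inE eqxx !orbT; lia.
Qed.

Lemma count_leq_iota k m : count (fun t => t <= k) (iota 1 m) = minn k m.
Proof.
elim: m => [|m IHm]; first by rewrite minn0.
by rewrite -[m.+1]addn1 iotaD count_cat IHm /=; lia.
Qed.

Lemma subpred_leq a b : a <= b -> subpred (fun t => t <= a) (fun t => t <= b).
Proof. by move=> le_ab t /leq_trans; apply. Qed.

Lemma shifted_DJS n a b c : 1 <= a -> a < b -> b < c -> c <= n ->
  c - b < a.*2 -> DJS n (shifted_basis n a b c).
Proof.
move=> a_gt0 lt_ab lt_bc le_cn lt_cb_2a; apply/DJS_windows => w uw mw.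
have memw x : (x \in w) = (0 < x <= c).
  have nl := nonloop_shiftedE x a_gt0 lt_ab lt_bc le_cn.
  by apply/idP/idP => [/mw/nl | /nl/mw].
have pw : perm_eq w (iota 1 c).
  by apply: uniq_perm => // [|x]; [exact: iota_uniq | rewrite memw mem_iota; lia].
apply/contraT => no_basis.
have unc : uncrowded (fun t => t <= a) (fun t => t <= b) w.
  apply/hasPn => W; rewrite mem_windows => /andP[W3 Ww]; apply: contra no_basis => crowdedW.
  apply/hasP; exists W; first by rewrite mem_windows W3.
  case/andP: crowdedW => smallW medW.
  rewrite shifted_basisE // (infix_uniq Ww uw) W3 smallW medW !andbT.
  by apply/allP => t /(mem_infix Ww); rewrite memw.
have bw : b \in w by rewrite memw; lia.
move: unc pw; case/splitPr: bw => L R unc pw.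
have small_medium := subpred_leq (ltnW lt_ab).
have size_w : 2 < size (L ++ b :: R) by rewrite (perm_size pw) size_iota; lia.
have countR : 2 * count (fun t => t <= a) R <= count (predC (fun t => t <= b)) R.
  exact (uncrowded_count_small small_medium (leqnn b) size_w unc).
have := uncrowded_rev unc; rewrite rev_cat rev_cons cat_rcons => unc_rev.
have size_rev_w : 2 < size (rev R ++ b :: rev L).
  by move: size_w; rewrite !size_cat /= !size_rev; lia.
have countL : 2 * count (fun t => t <= a) L <= count (predC (fun t => t <= b)) L.
  rewrite -!(count_rev _ L).
  exact (uncrowded_count_small small_medium (leqnn b) size_rev_w unc_rev).
have := permP pw (fun t => t <= a); have := permP pw (predC (fun t => t <= b)).
have := count_predC (fun t => t <= b) (iota 1 c).
rewrite !count_cat /= size_iota !count_leq_iota; lia.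
Qed.

Fixpoint pad_smalls b i :=
  if i is i'.+1 then [:: i, b + 2 * i' + 1, b + 2 * i' + 2 & pad_smalls b i'] else [::].

Lemma size_pad_smalls b i : size (pad_smalls b i) = 3 * i.
Proof. by elim: i => //= i ->; lia. Qed.

Lemma mem_pad_smalls b i x : (x \in pad_smalls b i) = (0 < x <= i) || (b < x <= b + 2 * i).
Proof. by elim: i => [|i IHi] /=; rewrite ?in_nil ?inE ?IHi; lia. Qed.

Lemma uncrowded_pad_smalls a b i t : a < b -> i <= a -> ~~ has (fun x => x <= a) t ->
  uncrowded (fun x => x <= a) (fun x => x <= b) (pad_smalls b i ++ t).
Proof.
move=> lt_ab le_ia small_t.
suff pad_unc u v : b < u -> b < v ->
    uncrowded (fun x => x <= a) (fun x => x <= b) [:: u, v & pad_smalls b i ++ t].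
  exact: uncrowded_infix (suffix_infix [:: b.+1; b.+1] _) (pad_unc _ _ _ _).
elim: i le_ia u v => [|i IHi] le_ia u v lt_bu lt_bv /=.
  by apply: uncrowded_hasNsmall; rewrite /= (negbTE small_t); lia.
rewrite !uncrowded_cons3 IHi; try lia.
by rewrite /crowded /=; lia.
Qed.

Lemma shifted_not_DJS n a b c : 1 <= a -> a < b -> b < c -> c <= n ->
  a.*2 <= c - b -> ~ DJS n (shifted_basis n a b c).
Proof.
move=> a_gt0 lt_ab lt_bc le_cn le_2a_cb /DJS_windows djs.
pose w := pad_smalls b a ++ iota (b + 2 * a).+1 (c - b - 2 * a) ++ iota a.+1 (b - a).
have memw x : (x \in w) = (0 < x <= c).
  by rewrite !mem_cat mem_pad_smalls !mem_iota; lia.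
have uw : uniq w.
  apply: (leq_size_uniq (iota_uniq 1 c)) => [x|]; first by rewrite memw mem_iota; lia.
  by rewrite !size_cat size_pad_smalls !size_iota; lia.
have unc : uncrowded (fun t => t <= a) (fun t => t <= b) w.
  by apply: uncrowded_pad_smalls => //; apply/hasPn => x; rewrite mem_cat !mem_iota; lia.
have mw x : x \in w <-> nonloop n (shifted_basis n a b c) x.
  by rewrite memw; apply: iff_sym; apply: nonloop_shiftedE.
have /hasP[W] := djs w uw mw.
rewrite mem_windows shifted_basisE // => /andP[/eqP W3 Ww] /and5P[_ _ _ smallW medW].
by have /negP[] := uncrowded_window unc Ww W3; apply/andP.
Qed.

Theorem proposition6p8 (n a b c : nat) :
  1 <= a -> a < b -> b < c -> c <= n ->
  (DJS n (shifted_basis n a b c) <-> (c - b)./2 < a).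
Proof.
move=> a_gt0 lt_ab lt_bc le_cn; rewrite ltn_half_double; split => [djs | ].
  by rewrite ltnNge; apply/negP => /(shifted_not_DJS a_gt0 lt_ab lt_bc le_cn).
exact: shifted_DJS.
Qed.
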